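(* Let $p,m,n\ge 1$ and $T\ge 1$ be integers, let $N$ be the number of workers, and let $\mathbb{F}$ be a sufficiently large finite field. For secure distributed matrix multiplication of $A\in\mathbb{F}^{s\times t}$ and $B\in\mathbb{F}^{s\times r}$ with partitioning parameters $p,m,n$ (as described in the context), there exists a one-sided $T$-secure linear coding scheme that achieves a recovery threshold of $2R(p,m,n)+T-1$, and there exists a fully $T$-secure linear coding scheme that achieves a recovery threshold of $2R(p,m,n)+2T-1$.
   Context: Distributed matrix multiplication setting: a master wants $C=A^\intercal B$ for $A\in\mathbb{F}^{s\times t}$, $B\in\mathbb{F}^{s\times r}$, where $p\mid s$, $m\mid t$, $n\mid r$. $A$ is partitioned into a $p$-by-$m$ grid of equal-size blocks $A_{j,k}\in\mathbb{F}^{\frac{s}{p}\times\frac{t}{m}}$ and $B$ into a $p$-by-$n$ grid of blocks $B_{j,k'}\in\mathbb{F}^{\frac{s}{p}\times\frac{r}{n}}$. There are $N$ workers; worker $i$ receives coded matrices $\tilde A_i\in\mathbb{F}^{\frac{s}{p}\times\frac{t}{m}}$ and $\tilde B_i\in\mathbb{F}^{\frac{s}{p}\times\frac{r}{n}}$, computes $\tilde A_i^\intercal\tilde B_i$ and returns it to the master. A linear coding scheme: the list of blocks of $A$ is possibly padded with i.i.d. uniformly random matrices of the same block size (random keys), likewise for $B$; each $\tilde A_i$ (resp. $\tilde B_i$) is a fixed linear combination of the padded list of blocks of $A$ (resp. $B$); and the master's decoding computes linear combinations of the received results. A scheme achieves recovery threshold $K$ if the master can correctly recover $C$ from the results of any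 subset of $K$ workers. The scheme is one-sided $T$-secure if $I(\{\tilde A_i\}_{i\in\mathcal{T}};A)=0$ for every set $\mathcal{T}$ of at most $T$ workers when $A$ is uniformly random; it is fully $T$-secure if $I(\{\tilde A_i,\tilde B_i\}_{i\in\mathcal{T}};A,B)=0$ for every $|\mathcal{T}|\le T$ when $A,B$ are uniformly random. $R(p,m,n)$ denotes the bilinear complexity (tensor rank of the matrix multiplication tensor) of multiplying an $m$-by-$p$ matrix by a $p$-by-$n$ matrix. *)

From HB Require Import structures.
From mathcomp Require Import all_boot all_order all_algebra zify.
From Stdlib Require Rdefinitions Raxioms Rpower.
Set Implicit Arguments. Unset Strict Implicit. Unset Printing Implicit Defensive.
Import GRing.Theory.
Local Open Scope ring_scope.

(* Mutual information between two random variables defined on a finite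
   uniform probability space Omega (natural logarithm):
     I(X;Y) = E[ ln ( P(X = X w, Y = Y w) / (P(X = X w) P(Y = Y w)) ) ]. *)
Definition Rreal := Rdefinitions.R.

Definition unif_prob (Omega : finType) (E : pred Omega) : Rreal :=
  Rdefinitions.Rmult (Raxioms.INR #|E|) (Rdefinitions.Rinv (Raxioms.INR #|Omega|)).

Definition mutual_info (Omega : finType) (X Y : eqType)
    (f : Omega -> X) (g : Omega -> Y) : Rreal :=
  \big[Rdefinitions.Rplus/Rdefinitions.IZR BinNums.Z0]_(w : Omega)
    Rdefinitions.Rmult (Rdefinitions.Rinv (Raxioms.INR #|Omega|))
      (Rpower.ln
        (Rdefinitions.Rmult
          (unif_prob [pred w' | (f w' == f w) && (g w' == g w)])
          (Rdefinitions.Rinv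
            (Rdefinitions.Rmult (unif_prob [pred w' | f w' == f w])
                                (unif_prob [pred w' | g w' == g w]))))).

(* Block partitioning: a matrix with p*a rows is cut into p row-blocks of
   height a; row x of block j is row j*a + x. *)
Lemma blk_idx_proof (p a : nat) (j : 'I_p) (x : 'I_a) : (j * a + x < p * a)%N.
Proof.
have hj := ltn_ord j; have hx := ltn_ord x.
have : (j.+1 * a <= p * a)%N by rewrite leq_mul2r hj orbT.
rewrite mulSn; lia.
Qed.

Definition blk_idx (p a : nat) (j : 'I_p) (x : 'I_a) : 'I_(p * a) :=
  Ordinal (blk_idx_proof j x).

Definition blk (F : Type) (p q a b : nat) (M : 'M[F]_(p * a, q * b))
    (j : 'I_p) (k : 'I_q) : 'M[F]_(a, b) :=
  \matrix_(x < a, y < b) M (blk_idx j x) (blk_idx k y).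

(* Bilinear complexity R(p,m,n): tensor rank over F of the tensor of the
   multiplication of an m x p matrix by a p x n matrix. *)
Definition mm_decomposition (F : fieldType) (p m n r : nat) : Prop :=
  exists (U : 'I_r -> 'M[F]_(m, p)) (V : 'I_r -> 'M[F]_(p, n))
         (W : 'I_r -> 'M[F]_(m, n)),
    forall (i : 'I_m) (j : 'I_p) (j' : 'I_p) (k : 'I_n) (i' : 'I_m) (k' : 'I_n),
      ((j == j') && (i == i') && (k == k'))%:R
        = \sum_(l < r) U l i j * V l j' k * W l i' k'.

Definition is_bilinear_complexity (F : fieldType) (p m n R : nat) : Prop :=
  mm_decomposition F p m n R /\ forall r, mm_decomposition F p m n r -> (R <= r)%N.

(* The padded list of blocks of A is (A_{j,k})_{j<p,k<m} followed by
   nkA random keys; similarly for B.  Decoding: for each set S of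
   responding workers, block (k,k') of C is a fixed linear combination of
   the received results. The scheme does not depend on the block sizes. *)
Record lin_scheme (F : fieldType) (p m n N : nat) := LinScheme {
  nkA : nat;
  nkB : nat;
  encA_blk : 'I_N -> 'I_p -> 'I_m -> F;
  encA_key : 'I_N -> 'I_nkA -> F;
  encB_blk : 'I_N -> 'I_p -> 'I_n -> F;
  encB_key : 'I_N -> 'I_nkB -> F;
  dec : {set 'I_N} -> 'I_N -> 'I_m -> 'I_n -> F
}.
Arguments nkA {F p m n N} l.
Arguments nkB {F p m n N} l.
Arguments encA_blk {F p m n N} l _ _ _.
Arguments encA_key {F p m n N} l _ _.
Arguments encB_blk {F p m n N} l _ _ _.
Arguments encB_key {F p m n N} l _ _.
Arguments dec {F p m n N} l _ _ _ _.

Section Scheme.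
Variables (F : finFieldType) (p m n N : nat) (sch : lin_scheme F p m n N).

(* coded matrix \tilde A_i, for block size a x b (so s = p*a, t = m*b) *)
Definition codedA (a b : nat) (A : 'M[F]_(p * a, m * b))
    (ZA : {ffun 'I_(nkA sch) -> 'M[F]_(a, b)}) (i : 'I_N) : 'M[F]_(a, b) :=
  \sum_(j < p) \sum_(k < m) encA_blk sch i j k *: blk A j k
  + \sum_(l < nkA sch) encA_key sch i l *: ZA l.

(* coded matrix \tilde B_i, for block size a x c (so r = n*c) *)
Definition codedB (a c : nat) (B : 'M[F]_(p * a, n * c))
    (ZB : {ffun 'I_(nkB sch) -> 'M[F]_(a, c)}) (i : 'I_N) : 'M[F]_(a, c) :=
  \sum_(j < p) \sum_(k < n) encB_blk sch i j k *: blk B j k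
  + \sum_(l < nkB sch) encB_key sch i l *: ZB l.

Definition achieves_threshold (K : nat) : Prop :=
  forall S : {set 'I_N}, #|S| = K ->
  forall (a b c : nat) (A : 'M[F]_(p * a, m * b)) (B : 'M[F]_(p * a, n * c))
         (ZA : {ffun 'I_(nkA sch) -> 'M[F]_(a, b)})
         (ZB : {ffun 'I_(nkB sch) -> 'M[F]_(a, c)})
         (k : 'I_m) (k' : 'I_n),
    blk (A^T *m B) k k' =
      \sum_(i in S) dec sch S i k k' *: ((codedA A ZA i)^T *m codedB B ZB i).

Definition obsA (a b : nat) (Tc : {set 'I_N})
    (w : 'M[F]_(p * a, m * b) * {ffun 'I_(nkA sch) -> 'M[F]_(a, b)})
    : {ffun 'I_N -> 'M[F]_(a, b)} :=
  [ffun i => if i \in Tc then codedA w.1 w.2 i else 0].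

(* One-sided T-security: A and the keys uniform and independent;
   I({\tilde A_i}_{i in Tc}; A) = 0 for all |Tc| <= T. *)
Definition one_sided_secure (T : nat) : Prop :=
  forall (a b : nat) (Tc : {set 'I_N}), (#|Tc| <= T)%N ->
    @mutual_info
      ('M[F]_(p * a, m * b) * {ffun 'I_(nkA sch) -> 'M[F]_(a, b)})%type
      _ _ (obsA Tc) (fun w => w.1) = Rdefinitions.IZR BinNums.Z0.

Definition obsAB (a b c : nat) (Tc : {set 'I_N})
    (w : ('M[F]_(p * a, m * b) * 'M[F]_(p * a, n * c)) *
         ({ffun 'I_(nkA sch) -> 'M[F]_(a, b)} * {ffun 'I_(nkB sch) -> 'M[F]_(a, c)}))
    : {ffun 'I_N -> 'M[F]_(a, b) * 'M[F]_(a, c)} :=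
  [ffun i => if i \in Tc then (codedA w.1.1 w.2.1 i, codedB w.1.2 w.2.2 i)
             else (0, 0)].

(* Full T-security: A, B and all keys uniform and independent;
   I({\tilde A_i, \tilde B_i}_{i in Tc}; A, B) = 0 for all |Tc| <= T. *)
Definition fully_secure (T : nat) : Prop :=
  forall (a b c : nat) (Tc : {set 'I_N}), (#|Tc| <= T)%N ->
    @mutual_info
      (('M[F]_(p * a, m * b) * 'M[F]_(p * a, n * c)) *
         ({ffun 'I_(nkA sch) -> 'M[F]_(a, b)} * {ffun 'I_(nkB sch) -> 'M[F]_(a, c)}))%type
      _ _ (obsAB Tc) (fun w => w.1) = Rdefinitions.IZR BinNums.Z0.

End Scheme.

From HB Require Import structures.
From mathcomp Require Import all_boot all_order all_algebra zify.
From Stdlib Require Reals Lra.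
Set Implicit Arguments. Unset Strict Implicit. Unset Printing Implicit Defensive.

(** Fix distinct points [be_1..be_R], and [al_1..al_N] for the workers, and a
   rank-[R] decomposition [(U_l, V_l, W_l)] of the matrix multiplication tensor.
   Worker [i] receives [f(al_i)] and [g(al_i)], where
   [f(x) = sum_l L_l(x) At_l + P(x) sum_(t<T) x^t Z_t] with [L_l] the Lagrange
   basis at the [be]'s, [P = prod_l (x - be_l)], [At_l = sum_(j,k) U_l(k,j) A_(j,k)]
   and random keys [Z_t]; [g] is built alike from [V_l] and [B] with [KB] keys.
   Then [f(be_l) = At_l], and [f^T g] has degree [< 2R + T + KB - 1], so that
   many answers determine [At_l^T Bt_l] by interpolation; the [W_l] recombine
   these into the blocks of [A^T B].  Since [P(al_i) <> 0] and the Vandermonde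
   matrix of [<= T] distinct points has full row rank, the key term takes every
   value on a colluding set; so a change of data is absorbed by a bijective
   shift of the keys, which makes the observations independent of the data.
   With [KB = 0] only [A] is hidden; with [KB = T] both are. *)

Module MutualInfo.
Import Stdlib.Reals.Reals Stdlib.micromega.Lra.

Lemma card_pred_pair (X Z : finType) (P : pred (X * Z)) :
  #|P| = (\sum_x #|[pred z | P (x, z)]|)%N.
Proof.
rewrite -sum1_card (eq_bigr (fun x => \sum_(z | P (x, z)) 1)%N) => [|x _].
  by rewrite pair_big_dep; apply: eq_bigl => -[].
by rewrite -sum1_card.
Qed.

Lemma card_pred_shift (X Z : finType) (Y : eqType) (f : X * Z -> Y)
    (sg : Z -> Z) x x' o :
  injective sg -> (forall z, f (x, sg z) = f (x', z)) ->
  #|[pred z | f (x, z) == o]| = #|[pred z | f (x', z) == o]|.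
Proof.
move=> sg_inj fsg; rewrite -!sum1_card (reindex_inj sg_inj).
by apply: eq_bigl => z; rewrite !inE fsg.
Qed.

(* The key [w.2] is uniform and independent of the data [w.1], so the
   hypothesis makes the law of the observation [f w] the same given every
   value of the data. *)
Lemma mutual_info_fst_eq0 (X Z : finType) (Y : eqType) (f : X * Z -> Y) :
  (forall x x', exists2 sg : Z -> Z,
     injective sg & forall z, f (x, sg z) = f (x', z)) ->
  mutual_info f (fun w => w.1) = 0%R.
Proof.
move=> shift; apply: (big_rec (fun r => r = 0%R)) => // -[x0 z0] r _ ->.
set o := f (x0, z0); set c := #|[pred z | f (x0, z) == o]|.
have card_joint : #|[pred w : X * Z | (f w == o) && (w.1 == x0)]| = c.
  rewrite card_pred_pair (bigD1 x0) //= big1 ?addn0 => [|x /negbTE x_neq].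
    by apply: eq_card => z; rewrite !inE eqxx andbT.
  by apply: eq_card0 => z; rewrite !inE x_neq andbF.
have card_obs : #|[pred w : X * Z | f w == o]| = (#|X| * c)%N.
  rewrite card_pred_pair -sum1_card big_distrl /=; apply: eq_bigr => x _.
  have [sg sg_inj fsg] := shift x x0.
  by rewrite mul1n (card_pred_shift o sg_inj fsg).
have card_data : #|[pred w : X * Z | w.1 == x0]| = #|Z|.
  rewrite card_pred_pair (bigD1 x0) //= big1 ?addn0 => [|x /negbTE x_neq].
    by apply: eq_card => z; rewrite !inE eqxx.
  by apply: eq_card0 => z; rewrite !inE x_neq.
have c_gt0 : (0 < INR c)%R by apply/lt_0_INR/ltP/card_gt0P; exists z0; rewrite inE.
have X_gt0 : (0 < INR #|X|)%R by apply/lt_0_INR/ltP/card_gt0P; exists x0.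
have Z_gt0 : (0 < INR #|Z|)%R by apply/lt_0_INR/ltP/card_gt0P; exists z0.
rewrite /unif_prob card_joint card_obs card_data card_prod !mult_INR.
have -> : (INR c * / (INR #|X| * INR #|Z|) *
      / (INR #|X| * INR c * / (INR #|X| * INR #|Z|) *
         (INR #|Z| * / (INR #|X| * INR #|Z|))))%R = 1%R.
  by field; lra.
by rewrite ln_1 Rmult_0_r Rplus_0_r.
Qed.

End MutualInfo.
Import MutualInfo GRing.Theory.
Local Open Scope ring_scope.

Section Lagrange.
Variables (F : fieldType) (I : finType) (S : {set I}) (al : I -> F).

Definition lagrange_basis (i : I) : {poly F} :=
  (\prod_(j in S :\ i) (al i - al j))^-1
    *: \prod_(j in S :\ i) ('X - (al j)%:P).

Lemma size_lagrange_basis i : i \in S -> (size (lagrange_basis i) <= #|S|)%N.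
Proof.
move=> iS; apply: leq_trans (size_scale_leq _ _) _.
by rewrite -big_enum size_prod_XsubC -cardE (cardsD1 i S) iS.
Qed.

Hypothesis al_inj : {in S &, injective al}.

Lemma lagrange_basis_sample i k :
  i \in S -> k \in S -> (lagrange_basis i).[al k] = (i == k)%:R.
Proof.
move=> iS kS; rewrite /lagrange_basis hornerZ horner_prod.
under [X in _ * X]eq_bigr do rewrite hornerXsubC.
have [<-|ik] := eqVneq i k.
  rewrite mulVf //; apply/prodf_neq0 => j; rewrite in_setD1 => /andP[ji jS].
  by rewrite subr_eq0; apply: contra ji => /eqP/al_inj-> //; rewrite eqxx.
by rewrite [X in _ * X](bigD1 k) /= ?in_setD1 1?eq_sym ?ik // subrr mul0r mulr0.
Qed.

Lemma lagrange_interpolation (q : {poly F}) y : (size q <= #|S|)%N ->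
  q.[y] = \sum_(i in S) q.[al i] * (lagrange_basis i).[y].
Proof.
move=> size_q; pose D := q - \sum_(i in S) q.[al i] *: lagrange_basis i.
suff : D == 0.
  rewrite /D subr_eq0 => /eqP/(congr1 (horner^~ y)) ->.
  by rewrite horner_sum; apply: eq_bigr => i _; rewrite hornerZ.
apply: contraT => D_neq0.
have D_roots : all (root D) [seq al i | i <- enum S].
  apply/allP => r /mapP[k]; rewrite mem_enum => kS ->.
  rewrite /root /D hornerD hornerN horner_sum (bigD1 k) //= big1 => [|i /andP[iS ik]].
    by rewrite hornerZ lagrange_basis_sample // eqxx mulr1 addr0 subrr.
  by rewrite hornerZ lagrange_basis_sample // (negbTE ik) mulr0.
have uniq_roots : uniq [seq al i | i <- enum S].
  by rewrite map_inj_in_uniq ?enum_uniq // => x z; rewrite !mem_enum; apply: al_inj.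
suff size_D : (size D <= #|S|)%N.
  have := max_poly_roots D_neq0 D_roots uniq_roots.
  by rewrite size_map -cardE ltnNge size_D.
apply: leq_trans (size_polyD _ _) _.
rewrite geq_max size_q size_polyN; apply: leq_trans (size_sum _ _ _) _.
apply/bigmax_leqP => i iS; apply: leq_trans (size_scale_leq _ _) _.
exact: size_lagrange_basis.
Qed.

End Lagrange.

Lemma blk_idx_inj (p a : nat) : injective (fun u : 'I_p * 'I_a => blk_idx u.1 u.2).
Proof.
move=> [j x] [j' x'] /(congr1 val) /= e.
have a_gt0 : (0 < a)%N by case: a x {e x'} => [[]|].
have hx := ltn_ord x; have hx' := ltn_ord x'.
have := congr1 (divn^~ a) e; rewrite /= !divnMDl // !divn_small // !addn0.
have := congr1 (modn^~ a) e; rewrite /= !modnMDl !modn_small //.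
by move=> /val_inj-> /val_inj->.
Qed.

Lemma big_blk_idx (V : nmodType) (p a : nat) (G : 'I_(p * a) -> V) :
  \sum_(r < p * a) G r = \sum_(j < p) \sum_(x < a) G (blk_idx j x).
Proof.
rewrite pair_big /=.
have blk_idx_bij : bijective (fun u : 'I_p * 'I_a => blk_idx u.1 u.2).
  by apply: inj_card_bij (@blk_idx_inj p a) _; rewrite card_prod !card_ord.
by rewrite (reindex _ (onW_bij _ blk_idx_bij)).
Qed.

Lemma blk_trmx_mul (R : pzSemiRingType) (p m n a b c : nat)
    (A : 'M[R]_(p * a, m * b)) (B : 'M[R]_(p * a, n * c)) k k' :
  blk (A^T *m B) k k' = \sum_(j < p) (blk A j k)^T *m blk B j k'.
Proof.
apply/matrixP => x y; rewrite /blk !mxE summxE big_blk_idx.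
by apply: eq_bigr => j _; rewrite !mxE; apply: eq_bigr => z _; rewrite !mxE.
Qed.

Section BlockCombination.
Variables (R : comPzRingType) (p a : nat).

Definition combine_blocks (q b : nat) (C : 'M[R]_(p, q)) (M : 'M[R]_(p * a, q * b))
    : 'M[R]_(a, b) :=
  \sum_(j < p) \sum_(k < q) C j k *: blk M j k.

Lemma combine_blocks_suml (I : Type) (r : seq I) (x : I -> R) q b
    (C : I -> 'M[R]_(p, q)) (M : 'M[R]_(p * a, q * b)) :
  combine_blocks (\sum_(l <- r) x l *: C l) M
    = \sum_(l <- r) x l *: combine_blocks (C l) M.
Proof.
rewrite /combine_blocks; under eq_bigr do under eq_bigr do rewrite summxE scaler_suml.
under [RHS]eq_bigr do rewrite scaler_sumr.
rewrite [RHS]exchange_big; apply: eq_bigr => j _.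
under [RHS]eq_bigr do rewrite scaler_sumr.
rewrite [RHS]exchange_big; apply: eq_bigr => k _.
by apply: eq_bigr => l _; rewrite !mxE scalerA.
Qed.

Lemma trmx_combine_blocks_mul q q' b c (C : 'M[R]_(p, q)) (D : 'M[R]_(p, q'))
    (A : 'M[R]_(p * a, q * b)) (B : 'M[R]_(p * a, q' * c)) :
  (combine_blocks C A)^T *m combine_blocks D B =
    \sum_j1 \sum_k1 \sum_j2 \sum_k2
      (C j1 k1 * D j2 k2) *: ((blk A j1 k1)^T *m blk B j2 k2).
Proof.
rewrite /combine_blocks [(\sum_j _)^T]linear_sum mulmx_suml; apply: eq_bigr => j1 _.
rewrite [X in X *m _]linear_sum mulmx_suml; apply: eq_bigr => k1 _.
rewrite linearZ /= -scalemxAl mulmx_sumr scaler_sumr; apply: eq_bigr => j2 _.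
rewrite mulmx_sumr scaler_sumr; apply: eq_bigr => k2 _.
by rewrite -scalemxAr scalerA.
Qed.

End BlockCombination.

Lemma mm_decomposition_contract (R : comPzRingType) (V : lmodType R) (p m n r : nat)
    (U : 'I_r -> 'M[R]_(m, p)) (V' : 'I_r -> 'M[R]_(p, n)) (W : 'I_r -> 'M[R]_(m, n))
    (X : 'I_p -> 'I_m -> 'I_p -> 'I_n -> V) k k' :
  (forall i j j' h i' h', ((j == j') && (i == i') && (h == h'))%:R
     = \sum_(l < r) U l i j * V' l j' h * W l i' h') ->
  \sum_(l < r) W l k k' *: \sum_j1 \sum_k1 \sum_j2 \sum_k2
      ((U l)^T j1 k1 * V' l j2 k2) *: X j1 k1 j2 k2
    = \sum_j X j k j k'.
Proof.
move=> UVW.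
have collapse j1 : \sum_k1 \sum_j2 \sum_k2
    ((j1 == j2) && (k1 == k) && (k2 == k'))%:R *: X j1 k1 j2 k2 = X j1 k j1 k'.
  rewrite (bigD1 k) //= [Y in _ + Y]big1 ?addr0 => [|k1 /negbTE k1k]; last first.
    by apply: big1 => j2 _; apply: big1 => k2 _; rewrite k1k andbF scale0r.
  rewrite (bigD1 j1) //= [Y in _ + Y]big1 ?addr0 => [|j2 j2j]; last first.
    by apply: big1 => k2 _; rewrite eq_sym (negbTE j2j) scale0r.
  rewrite (bigD1 k') //= [Y in _ + Y]big1 ?addr0 => [|k2 /negbTE k2k]; last first.
    by rewrite k2k andbF scale0r.
  by rewrite !eqxx scale1r.
transitivity (\sum_j1 \sum_k1 \sum_j2 \sum_k2
    ((j1 == j2) && (k1 == k) && (k2 == k'))%:R *: X j1 k1 j2 k2); last first.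
  by apply: eq_bigr => j1 _; apply: collapse.
under eq_bigr do rewrite scaler_sumr; rewrite exchange_big; apply: eq_bigr => j1 _.
under eq_bigr do rewrite scaler_sumr; rewrite exchange_big; apply: eq_bigr => k1 _.
under eq_bigr do rewrite scaler_sumr; rewrite exchange_big; apply: eq_bigr => j2 _.
under eq_bigr do rewrite scaler_sumr; rewrite exchange_big; apply: eq_bigr => k2 _.
rewrite UVW scaler_suml; apply: eq_bigr => l _.
by rewrite scalerA mxE mulrC.
Qed.

Section Encoding.
Variables (F : fieldType) (N R : nat) (al : 'I_N -> F) (be : 'I_R -> F).
Hypotheses (al_inj : injective al) (be_inj : injective be).
Hypothesis al_neq_be : forall i l, al i != be l.

Definition basis_be (l : 'I_R) : {poly F} := lagrange_basis setT be l.
Definition vanish_be : {poly F} := \prod_(l < R) ('X - (be l)%:P).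

Lemma basis_be_sample l l' : (basis_be l).[be l'] = (l == l')%:R.
Proof. by apply: lagrange_basis_sample => // x y _ _; apply: be_inj. Qed.

Lemma size_basis_be l : (size (basis_be l) <= R)%N.
Proof. by rewrite -[R]card_ord -cardsT size_lagrange_basis. Qed.

Lemma vanish_be_root l : vanish_be.[be l] = 0.
Proof. by rewrite /vanish_be horner_prod (bigD1 l) //= hornerXsubC subrr mul0r. Qed.

Lemma vanish_be_al i : vanish_be.[al i] != 0.
Proof.
by rewrite /vanish_be horner_prod; apply/prodf_neq0 => l _; rewrite hornerXsubC subr_eq0.
Qed.

Lemma size_vanish_be : size vanish_be = R.+1.
Proof. by rewrite /vanish_be -big_enum size_prod_XsubC -cardE card_ord. Qed.

Section Evaluation.
Variables (K a b : nat).

Definition key_mask (Z : 'I_K -> 'M[F]_(a, b)) (x : F) : 'M[F]_(a, b) :=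
  vanish_be.[x] *: \sum_(t < K) x ^+ t *: Z t.

Definition encode (M : 'I_R -> 'M[F]_(a, b)) (Z : 'I_K -> 'M[F]_(a, b)) (x : F) :=
  \sum_l (basis_be l).[x] *: M l + key_mask Z x.

Definition encode_poly (M : 'I_R -> 'M[F]_(a, b)) (Z : 'I_K -> 'M[F]_(a, b)) u v :=
  \sum_l M l u v *: basis_be l + vanish_be * \sum_(t < K) Z t u v *: 'X^t.

Lemma encode_entry M Z x u v : encode M Z x u v = (encode_poly M Z u v).[x].
Proof.
rewrite /encode /key_mask /encode_poly !mxE summxE hornerD horner_sum hornerM horner_sum.
congr (_ + _); first by apply: eq_bigr => l _; rewrite mxE [RHS]hornerZ mulrC.
rewrite summxE; congr (_ * _); apply: eq_bigr => t _.
by rewrite mxE hornerZ hornerXn mulrC.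
Qed.

Lemma encode_be M Z l : encode M Z (be l) = M l.
Proof.
rewrite /encode /key_mask vanish_be_root scale0r addr0 (bigD1 l) //= big1 ?addr0.
  by rewrite basis_be_sample eqxx scale1r.
by move=> l' l'l; rewrite basis_be_sample (negbTE l'l) scale0r.
Qed.

Lemma size_encode_poly M Z u v : (size (encode_poly M Z u v) <= R + K)%N.
Proof.
apply: leq_trans (size_polyD _ _) _; rewrite geq_max; apply/andP; split.
  apply: leq_trans (size_sum _ _ _) _; apply/bigmax_leqP => l _.
  apply: leq_trans (size_scale_leq _ _) _.
  exact: leq_trans (size_basis_be l) (leq_addr _ _).
apply: leq_trans (size_polyMleq _ _) _; rewrite size_vanish_be addSn /= leq_add2l.
apply: leq_trans (size_sum _ _ _) _; apply/bigmax_leqP => t _.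
by apply: leq_trans (size_scale_leq _ _) _; rewrite size_polyXn.
Qed.

End Evaluation.

Lemma interpolate_encode_mul (a b c K1 K2 : nat) (S : {set 'I_N})
    (M1 : 'I_R -> 'M[F]_(a, b)) (Z1 : 'I_K1 -> 'M[F]_(a, b))
    (M2 : 'I_R -> 'M[F]_(a, c)) (Z2 : 'I_K2 -> 'M[F]_(a, c)) l :
  ((R + K1 + (R + K2)).-1 <= #|S|)%N ->
  \sum_(i in S) (lagrange_basis S al i).[be l] *:
      ((encode M1 Z1 (al i))^T *m encode M2 Z2 (al i))
    = (M1 l)^T *m M2 l.
Proof.
move=> size_S; apply/matrixP => u v.
pose H : {poly F} := \sum_w encode_poly M1 Z1 w u * encode_poly M2 Z2 w v.
have H_eval x : ((encode M1 Z1 x)^T *m encode M2 Z2 x) u v = H.[x].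
  by rewrite !mxE /H horner_sum; apply: eq_bigr => w _; rewrite mxE hornerM !encode_entry.
rewrite -(encode_be M1 Z1 l) -(encode_be M2 Z2 l) H_eval.
rewrite (lagrange_interpolation (S := S) (al := al)); last first.
- apply: leq_trans size_S; apply: leq_trans (size_sum _ _ _) _.
  apply/bigmax_leqP => w _; apply: leq_trans (size_polyMleq _ _) _.
  by rewrite -!subn1 leq_sub2r // leq_add ?size_encode_poly.
- by move=> x y _ _; apply: al_inj.
by rewrite summxE; apply: eq_bigr => i _; rewrite mxE H_eval mulrC.
Qed.

(* The coefficients of the Lagrange basis polynomials at the [al i], i in [Tc],
   give a right inverse of the Vandermonde matrix [(al i ^+ t)_(i, t < T)]. *)
Lemma key_mask_surjective (a b T : nat) (Tc : {set 'I_N}) (D : 'I_N -> 'M[F]_(a, b)) :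
  (#|Tc| <= T)%N ->
  exists Z : 'I_T -> 'M[F]_(a, b), {in Tc, forall i, key_mask Z (al i) = D i}.
Proof.
move=> size_Tc.
have al_inj_Tc : {in Tc &, injective al} by move=> x y _ _; apply: al_inj.
exists (fun t =>
  \sum_(i in Tc) ((vanish_be.[al i])^-1 * (lagrange_basis Tc al i)`_t) *: D i).
move=> k kTc; rewrite /key_mask.
have -> : \sum_(t < T) al k ^+ t *:
      \sum_(i in Tc) ((vanish_be.[al i])^-1 * (lagrange_basis Tc al i)`_t) *: D i
    = \sum_(i in Tc) ((vanish_be.[al i])^-1 * (lagrange_basis Tc al i).[al k]) *: D i.
  under eq_bigr do rewrite scaler_sumr.
  rewrite exchange_big /=; apply: eq_bigr => i iTc.
  rewrite [(lagrange_basis _ _ _).[_]](@horner_coef_wide _ T); last first.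
    exact: leq_trans (size_lagrange_basis al iTc) size_Tc.
  rewrite mulr_sumr scaler_suml; apply: eq_bigr => t _.
  by rewrite scalerA mulrCA [al k ^+ t * _]mulrC.
rewrite (bigD1 k) //= big1 ?addr0 => [|i /andP[iTc ik]]; last first.
  by rewrite lagrange_basis_sample // (negbTE ik) mulr0 scale0r.
by rewrite lagrange_basis_sample // eqxx mulr1 scalerA mulfV ?scale1r ?vanish_be_al.
Qed.

Lemma encode_key_shift (a b T : nat) (Tc : {set 'I_N}) (M M' : 'I_R -> 'M[F]_(a, b)) :
  (#|Tc| <= T)%N ->
  exists2 sg : {ffun 'I_T -> 'M[F]_(a, b)} -> {ffun 'I_T -> 'M[F]_(a, b)},
    injective sg &
    forall z, {in Tc, forall i, encode M (sg z) (al i) = encode M' z (al i)}.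
Proof.
move=> size_Tc.
pose data (M0 : 'I_R -> 'M[F]_(a, b)) x := \sum_l (basis_be l).[x] *: M0 l.
have [Z0 Z0_mask] :=
  key_mask_surjective (fun i => data M' (al i) - data M (al i)) size_Tc.
exists (fun z => [ffun t => z t + Z0 t]).
  by move=> z1 z2 /ffunP z12; apply/ffunP => t; have := z12 t; rewrite !ffunE => /addIr.
move=> z i iTc; rewrite /encode.
have mask_add :
    key_mask [ffun t => z t + Z0 t] (al i) = key_mask z (al i) + key_mask Z0 (al i).
  rewrite /key_mask -scalerDr -big_split; congr (_ *: _).
  by apply: eq_bigr => t _; rewrite ffunE scalerDr.
by rewrite mask_add Z0_mask // /data addrCA [X in _ + X]addrC subrK addrC.
Qed.

End Encoding.

Section Scheme.
Variables (F : finFieldType) (p m n N R T : nat).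
Variables (al : 'I_N -> F) (be : 'I_R -> F).
Hypotheses (al_inj : injective al) (be_inj : injective be).
Hypothesis al_neq_be : forall i l, al i != be l.
Variables (U : 'I_R -> 'M[F]_(m, p)) (V : 'I_R -> 'M[F]_(p, n)).
Variable W : 'I_R -> 'M[F]_(m, n).
Hypothesis UVW : forall i j j' k i' k', ((j == j') && (i == i') && (k == k'))%:R
  = \sum_(l < R) U l i j * V l j' k * W l i' k'.

Definition scheme (KB : nat) : lin_scheme F p m n N :=
  @LinScheme F p m n N T KB
    (fun i => \sum_l (basis_be be l).[al i] *: (U l)^T)
    (fun i t => (vanish_be be).[al i] * al i ^+ t)
    (fun i => \sum_l (basis_be be l).[al i] *: V l)
    (fun i t => (vanish_be be).[al i] * al i ^+ t)
    (fun S i k k' => \sum_l W l k k' * (lagrange_basis S al i).[be l]).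

Lemma key_sum_mask (K a b : nat) (Z : 'I_K -> 'M[F]_(a, b)) i :
  \sum_(t < K) ((vanish_be be).[al i] * al i ^+ t) *: Z t = key_mask be Z (al i).
Proof. by rewrite /key_mask scaler_sumr; apply: eq_bigr => t _; rewrite scalerA. Qed.

Lemma codedA_encode KB a b (A : 'M[F]_(p * a, m * b)) ZA i :
  codedA (sch := scheme KB) A ZA i
    = encode be (fun l => combine_blocks (U l)^T A) ZA (al i).
Proof.
by rewrite /codedA /= -/(combine_blocks _ A) combine_blocks_suml key_sum_mask.
Qed.

Lemma codedB_encode KB a c (B : 'M[F]_(p * a, n * c)) ZB i :
  codedB (sch := scheme KB) B ZB i
    = encode be (fun l => combine_blocks (V l) B) ZB (al i).
Proof.
by rewrite /codedB /= -/(combine_blocks _ B) combine_blocks_suml key_sum_mask.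
Qed.

Lemma scheme_threshold KB : achieves_threshold (scheme KB) (2 * R + T + KB - 1).
Proof.
move=> S size_S a b c A B ZA ZB k k'.
have size_S' : ((R + T + (R + KB)).-1 <= #|S|)%N by rewrite size_S; lia.
pose MA l := combine_blocks (U l)^T A; pose MB l := combine_blocks (V l) B.
have decode l : (MA l)^T *m MB l = \sum_(i in S) (lagrange_basis S al i).[be l] *:
    ((codedA (sch := scheme KB) A ZA i)^T *m codedB (sch := scheme KB) B ZB i).
  rewrite -(interpolate_encode_mul al_inj be_inj MA ZA MB ZB l size_S').
  by apply: eq_bigr => i _; rewrite codedA_encode codedB_encode.
pose X j1 k1 j2 k2 := (blk A j1 k1)^T *m blk B j2 k2.
rewrite blk_trmx_mul -(mm_decomposition_contract X k k' UVW).
under eq_bigr do rewrite -trmx_combine_blocks_mul decode scaler_sumr.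
rewrite exchange_big; apply: eq_bigr => i _.
by rewrite scaler_suml; apply: eq_bigr => l _; rewrite scalerA.
Qed.

Lemma scheme_one_sided_secure KB : one_sided_secure (scheme KB) T.
Proof.
move=> a b Tc size_Tc; apply: mutual_info_fst_eq0 => A A'.
have [sg sg_inj sg_shift] := encode_key_shift al_inj al_neq_be
  (fun l => combine_blocks (U l)^T A) (fun l => combine_blocks (U l)^T A') size_Tc.
exists sg => // z; apply/ffunP => i; rewrite !ffunE /=.
by case: ifP => // iTc; rewrite !codedA_encode sg_shift.
Qed.

Lemma scheme_fully_secure : fully_secure (scheme T) T.
Proof.
move=> a b c Tc size_Tc; apply: mutual_info_fst_eq0 => -[A B] [A' B'].
have [sgA sgA_inj sgA_shift] := encode_key_shift al_inj al_neq_be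
  (fun l => combine_blocks (U l)^T A) (fun l => combine_blocks (U l)^T A') size_Tc.
have [sgB sgB_inj sgB_shift] := encode_key_shift al_inj al_neq_be
  (fun l => combine_blocks (V l) B) (fun l => combine_blocks (V l) B') size_Tc.
exists (fun z => (sgA z.1, sgB z.2)).
  by move=> [z1 z2] [z3 z4] [/sgA_inj -> /sgB_inj ->].
move=> [zA zB]; apply/ffunP => i; rewrite !ffunE /=.
by case: ifP => // iTc; rewrite !codedA_encode !codedB_encode sgA_shift ?sgB_shift.
Qed.

End Scheme.

Lemma mm_decomposition_trivial (F : fieldType) (p m n : nat) :
  mm_decomposition F p m n #|{: 'I_m * 'I_p * 'I_n}|.
Proof.
pose t l := @enum_val _ (mem {: 'I_m * 'I_p * 'I_n}) l.
exists (fun l => delta_mx (t l).1.1 (t l).1.2), (fun l => delta_mx (t l).1.2 (t l).2),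
  (fun l => delta_mx (t l).1.1 (t l).2) => i j j' k i' k'.
rewrite -(big_enum_val (A := {: 'I_m * 'I_p * 'I_n}) (fun x : 'I_m * 'I_p * 'I_n =>
  delta_mx x.1.1 x.1.2 i j * delta_mx x.1.2 x.2 j' k * delta_mx x.1.1 x.2 i' k')) /=.
rewrite (bigD1 (i, j, k)) //= [X in _ + X]big1 ?addr0 => [|[[i1 j1] k1] /= ijk1].
  rewrite !mxE !eqxx /= andbT mul1r -natrM mulnb.
  by rewrite (eq_sym j') (eq_sym i') (eq_sym k') andbA.
rewrite !mxE; move: ijk1.
have [<-|_] := eqVneq i i1; last by rewrite !mul0r.
have [<-|_] := eqVneq j j1; last by rewrite !mul0r.
by have [<-|_] := eqVneq k k1; rewrite ?eqxx // andbF mulr0 mul0r.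
Qed.

Lemma bilinear_complexity_le (F : fieldType) (p m n R : nat) :
  is_bilinear_complexity F p m n R -> (R <= m * p * n)%N.
Proof.
by case=> _ /(_ _ (mm_decomposition_trivial F p m n)); rewrite !card_prod !card_ord.
Qed.

Lemma separated_points (F : finType) (N R : nat) : (N + R <= #|F|)%N ->
  exists (al : 'I_N -> F) (be : 'I_R -> F),
    [/\ injective al, injective be & forall i l, al i != be l].
Proof.
move=> size_F; pose e (k : 'I_(N + R)) : F := enum_val (widen_ord size_F k).
have e_inj : injective e by move=> x y /enum_val_inj/(congr1 val) /= /val_inj.
exists (fun i => e (lshift R i)), (fun l => e (rshift N l)); split.
- by move=> x y /e_inj/lshift_inj.
- by move=> x y /e_inj/rshift_inj.
- move=> i l; apply/eqP => /e_inj/(congr1 val) /=.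
  by have := ltn_ord i; lia.
Qed.

Close Scope ring_scope.

Theorem theorem1 :
  forall (p m n T N : nat), (1 <= p)%N -> (1 <= m)%N -> (1 <= n)%N -> (1 <= T)%N ->
  exists q0 : nat, forall F : finFieldType, (q0 <= #|F|)%N ->
  forall R : nat, is_bilinear_complexity F p m n R ->
    (exists sch : lin_scheme F p m n N,
        one_sided_secure sch T /\ achieves_threshold sch (2 * R + T - 1)) /\
    (exists sch : lin_scheme F p m n N,
        fully_secure sch T /\ achieves_threshold sch (2 * R + 2 * T - 1)).
Proof.
move=> p m n T N _ _ _ _; exists (N + m * p * n) => F size_F R R_rank.
have [[U [V [W UVW]]] _] := R_rank.
have /separated_points[al [be [al_inj be_inj al_neq_be]]] : N + R <= #|F|.
  by apply: leq_trans size_F; rewrite leq_add2l (bilinear_complexity_le R_rank).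
split.
  exists (scheme T al be U V W 0); split; first exact: scheme_one_sided_secure.
  by rewrite -[2 * R + T]addn0; exact: scheme_threshold.
exists (scheme T al be U V W T); split; first exact: scheme_fully_secure.
have -> : 2 * R + 2 * T - 1 = 2 * R + T + T - 1 by lia.
exact: scheme_threshold.
Qed.
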